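(* The set $\mathcal{I}_{\mathrm{str}}(\Lambda)$ has the cardinality of the continuum.
   Context: Let $\mathbf{2}=\{0,1\}$. A partial function of arity $n$ on $\mathbf{2}$ is a map $f:\operatorname{dom} f\to\mathbf{2}$ with $\operatorname{dom} f\subseteq \mathbf{2}^n$; it is total if $\operatorname{dom} f=\mathbf{2}^n$. $P_{\mathbf{2}}$ is the set of all partial functions, $O_{\mathbf{2}}$ the set of total ones. Composition $F=f(g_1,\dots,g_n)$ is given by $F(\mathbf{x})=f(g_1(\mathbf{x}),\dots,g_n(\mathbf{x}))$ on $\operatorname{dom} F=\{\mathbf{x}\in\bigcap_i\operatorname{dom} g_i : (g_1(\mathbf{x}),\dots,g_n(\mathbf{x}))\in\operatorname{dom} f\}$. A partial clone is a composition-closed subset of $P_{\mathbf{2}}$ containing all projections; a total clone is one contained in $O_{\mathbf{2}}$. A partial clone $X$ is strong if it contains every restriction of each of its members. For a total clone $C$, $\mathcal{I}_{\mathrm{str}}(C)$ is the set of all strong partial clones $X$ with $X\cap O_{\mathbf{2}}=C$. $\Lambda$ is the total clone generated by the binary conjunction $\land$ and the constant functions $c_0,c_1$. *)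

From mathcomp Require Import all_boot.
From mathcomp Require Import boolp classical_sets cardinality.
Set Implicit Arguments. Unset Strict Implicit. Unset Printing Implicit Defensive.
Local Open Scope classical_set_scope.

(* A partial function on 2 = bool: an arity n and a map 2^n -> option 2;
   dom f = {x | fn f x <> None}. *)
Record pfun := PFun { ar : nat; fn : ar.-tuple bool -> option bool }.
Arguments fn : clear implicits.

(* Arities are >= 1 (standard convention for clones). *)
Definition P2 : set pfun := [set f | 0 < ar f].

Definition O2 : set pfun := [set f | 0 < ar f /\ forall x, fn f x <> None].

Definition pcomp n m (f : n.-tuple bool -> option bool)
  (gs : 'I_n -> m.-tuple bool -> option bool) (x : m.-tuple bool) : option bool :=
  if [forall i : 'I_n, gs i x != None]
  then f [tuple odflt false (gs i x) | i < n]
  else None.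

Definition proj (m : nat) (i : 'I_m) : pfun := PFun (fun x : m.-tuple bool => Some (tnth x i)).

Definition partial_clone (X : set pfun) : Prop :=
  X `<=` P2 /\
  (forall m (i : 'I_m), X (proj i)) /\
  (forall (f : pfun) (m : nat) (gs : 'I_(ar f) -> m.-tuple bool -> option bool),
      X f -> (forall i, X (PFun (gs i))) -> X (PFun (pcomp (fn f) gs))).

Definition total_clone (X : set pfun) : Prop := partial_clone X /\ X `<=` O2.

Definition restriction (g f : pfun) : Prop :=
  exists e : ar g = ar f,
    forall x b, fn g x = Some b -> fn f (tcast e x) = Some b.

Definition strong (X : set pfun) : Prop :=
  forall f g, X f -> restriction g f -> X g.

Definition strong_partial_clone (X : set pfun) : Prop := partial_clone X /\ strong X.

Definition gen_clone (S : set pfun) : set pfun :=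
  \bigcap_(X in [set X | partial_clone X /\ S `<=` X]) X.

Definition and2 : pfun :=
  PFun (fun x : 2.-tuple bool => Some (tnth x ord0 && tnth x ord_max)).
Definition c0 : pfun := PFun (fun _ : 1.-tuple bool => Some false).
Definition c1 : pfun := PFun (fun _ : 1.-tuple bool => Some true).

Definition Lambda : set pfun := gen_clone [set and2; c0; c1].

Definition I_str (C : set pfun) : set (set pfun) :=
  [set X | strong_partial_clone X /\ X `&` O2 = C].

(* A set of partial functions preserving a family of relations, in the partial
   sense where only argument rows inside the domain are tested, is a strong
   partial clone.  For A ⊆ ℕ let X_A consist of the functions preserving the graph
   of ∧ and the relations Γ_(k+10), k ∉ A.

   A total function preserving the graph of ∧ is a meet homomorphism 2^n → 2,
   hence a constant or a conjunction of variables, and so lies in Λ; conversely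
   the generators of Λ preserve every relation that is closed under pointwise ∧
   and contains the constant tuples.  Hence X_A ∩ O_2 = Λ.

   The separating function f_n is the n-ary disjunction restricted to the tuples
   with 1, 3 or n zeros, and Γ_n is a relation indexed by the subsets of n that
   links the values at singletons, triples and the whole set.  When f_m is applied
   to rows whose columns lie in Γ_n, the only way to leave Γ_n is for the zero
   sets of the singleton rows to have at most three elements each and to cover
   all m coordinates; the triple condition then forces them to be distinct
   singletons, i.e. a bijection between n and m.  So f_m preserves Γ_n for m ≠ n,
   f_n does not, f_(k+10) ∈ X_A iff k ∈ A, and A ↦ X_A is injective.  As P_2 is
   countable there are at most continuum many sets of partial functions. *)

From Pilot Require Import Defs.
From mathcomp Require Import all_boot.
From mathcomp Require Import boolp classical_sets cardinality.
Set Implicit Arguments. Unset Strict Implicit. Unset Printing Implicit Defensive.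
Local Open Scope classical_set_scope.
Local Open Scope card_scope.

Definition preserves (I : Type) (R : (I -> bool) -> Prop) (f : pfun) : Prop :=
  forall r : I -> (ar f).-tuple bool,
    (forall i, fn f (r i) <> None) ->
    (forall j : 'I_(ar f), R (fun i => tnth (r i) j)) ->
    R (fun i => odflt false (fn f (r i))).

Definition Pol (I : Type) (R : (I -> bool) -> Prop) : set pfun :=
  [set f | 0 < ar f /\ preserves R f].

Section Preservation.
Variables (I : Type) (R : (I -> bool) -> Prop).

Lemma preserves_proj m (i : 'I_m) : preserves R (proj i).
Proof. by move=> r _; apply. Qed.

Lemma preserves_pcomp (f : pfun) m (gs : 'I_(ar f) -> m.-tuple bool -> option bool) :
  preserves R f -> (forall k, preserves R (PFun (gs k))) ->
  preserves R (PFun (Defs.pcomp (fn f) gs)).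
Proof.
move=> Rf Rgs r /= r_dom r_col.
have gs_dom i : [forall k, gs k (r i) != None].
  by move: (r_dom i); rewrite /Defs.pcomp; case: ifP.
pose r' i := [tuple odflt false (gs k (r i)) | k < ar f].
have -> : (fun i => odflt false (Defs.pcomp (fn f) gs (r i))) =
          (fun i => odflt false (fn f (r' i))).
  by apply: funext => i; rewrite /Defs.pcomp gs_dom.
apply: Rf => [i|k]; first by move: (r_dom i); rewrite /Defs.pcomp gs_dom.
under eq_fun do rewrite tnth_mktuple.
by apply: Rgs => // i /=; apply/eqP/(forallP (gs_dom i) k).
Qed.

Lemma preserves_restriction (f g : pfun) :
  preserves R f -> restriction g f -> preserves R g.
Proof.
case: f g => n F [n' G] Rf [/= e gF]; subst n'.
move=> r /= r_dom r_col.
have FG i : F (r i) = G (r i).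
  move: (r_dom i) (gF (r i)); rewrite tcast_id.
  by case: (G (r i)) => // b _ /(_ b erefl).
have := Rf r; rewrite /=; under eq_fun do rewrite FG.
by apply=> // i; rewrite FG.
Qed.

Lemma strong_partial_clone_Pol : strong_partial_clone (Pol R).
Proof.
split; first split.
- by move=> f [].
- split.
    by move=> m i; split; [exact: leq_ltn_trans (ltn_ord i) | exact: preserves_proj].
  move=> f m gs [f_gt0 Rf] Rgs; split; first by case: (Rgs (Ordinal f_gt0)).
  by apply: preserves_pcomp => // k; case: (Rgs k).
- move=> f g [f_gt0 Rf] gf; split; last exact: preserves_restriction gf.
  by case: gf => e _; rewrite e.
Qed.

End Preservation.

Lemma strong_partial_clone_setI_bigcap (J : Type) (D : set J) (X : set pfun)
    (Y : J -> set pfun) :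
  strong_partial_clone X -> (forall j, strong_partial_clone (Y j)) ->
  strong_partial_clone (X `&` \bigcap_(j in D) Y j).
Proof.
move=> [[XP2 [Xproj Xcomp]] Xstr] Yspc; split; first split.
- by move=> f [/XP2].
- split; first by move=> m i; split=> // j _; have [[_ []]] := Yspc j.
  move=> f m gs [Xf Yf] XYgs; split.
    by apply: Xcomp => // k; case: (XYgs k).
  move=> j Dj; have [[_ [_ Ycomp]] _] := Yspc j.
  by apply: Ycomp (Yf j Dj) _ => k; case: (XYgs k) => _ /(_ j Dj).
- move=> f g [Xf Yf] gf; split; first exact: Xstr gf.
  by move=> j Dj; exact: (Yspc j).2 (Yf j Dj) gf.
Qed.

Lemma gen_clone_min (S X : set pfun) : partial_clone X -> S `<=` X -> gen_clone S `<=` X.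
Proof. by move=> Xpc SX f; apply. Qed.

Lemma partial_clone_O2 : partial_clone O2.
Proof.
split; first by move=> f [].
split; first by move=> m i; split=> //; exact: leq_ltn_trans (ltn_ord i).
move=> f m gs [f_gt0 f_tot] gs_tot; split; first by case: (gs_tot (Ordinal f_gt0)).
move=> x; rewrite /= /Defs.pcomp.
have -> : [forall k, gs k x != None].
  by apply/forallP => k; apply/eqP; case: (gs_tot k) => _; apply.
exact: f_tot.
Qed.

Lemma total_clone_gen_clone (S : set pfun) : S `<=` O2 -> total_clone (gen_clone S).
Proof.
move=> SO2; have genO2 := gen_clone_min partial_clone_O2 SO2.
split=> //; split; first by move=> f /genO2 [].
split; first by move=> m i X [[_ []]].
move=> f m gs genf gengs X XS.
by apply: XS.1.2.2 (genf X XS) _ => k; apply: gengs.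
Qed.

Lemma Lambda_gens_total : [set and2; c0; c1] `<=` O2.
Proof. by move=> g [[->|->]|->]. Qed.

Lemma partial_clone_Lambda : partial_clone Lambda.
Proof. exact: (total_clone_gen_clone Lambda_gens_total).1. Qed.

Lemma Lambda_gens : [set and2; c0; c1] `<=` Lambda.
Proof. by move=> g Sg X [_]; apply. Qed.

Lemma Lambda_sub_Pol (I : Type) (R : (I -> bool) -> Prop) :
  (forall x y, R x -> R y -> R (fun i => x i && y i)) ->
  R (fun=> true) -> R (fun=> false) -> Lambda `<=` Pol R.
Proof.
move=> R_and R_true R_false.
apply: gen_clone_min (strong_partial_clone_Pol R).1 _ => g [[->|->]|->];
  split=> // r _ r_col.
exact: R_and (r_col ord0) (r_col ord_max).
Qed.

Definition total_pfun n (g : n.-tuple bool -> bool) : pfun := PFun (fun x => Some (g x)).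

Lemma Lambda_const n b : 0 < n -> Lambda (total_pfun (fun _ : n.-tuple bool => b)).
Proof.
move=> n_gt0; have [_ [Lproj Lcomp]] := partial_clone_Lambda.
have := Lcomp (if b then c1 else c0) n (fun _ => fn (proj (Ordinal n_gt0))).
have -> : Defs.pcomp (fn (if b then c1 else c0)) (fun _ => fn (proj (Ordinal n_gt0)))
          = fun _ => Some b.
  by apply: funext => x; rewrite /Defs.pcomp; case: forallP => [|[]//]; case: b.
apply; last by move=> i; exact: Lproj.
by apply: Lambda_gens; case: b; [right | left; right].
Qed.

Lemma Lambda_and n (g h : n.-tuple bool -> bool) :
  Lambda (total_pfun g) -> Lambda (total_pfun h) -> Lambda (total_pfun (fun x => g x && h x)).
Proof.
move=> Lg Lh; have [_ [_ Lcomp]] := partial_clone_Lambda.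
pose gh (k : 'I_2) (x : n.-tuple bool) := Some (if k == ord0 then g x else h x).
have := Lcomp and2 n gh.
have -> : Defs.pcomp (fn and2) gh = fun x => Some (g x && h x).
  by apply: funext => x; rewrite /Defs.pcomp; case: forallP => [|[]] /=;
     rewrite ?tnth_mktuple.
by apply; [apply: Lambda_gens; left; left | move=> k; rewrite /gh; case: (k == ord0)].
Qed.

Lemma Lambda_forall_in n (S : {set 'I_n}) :
  0 < n -> Lambda (total_pfun (fun x : n.-tuple bool => [forall j in S, tnth x j])).
Proof.
move=> n_gt0.
pose andf (g h : n.-tuple bool -> bool) x := g x && h x.
have -> : (fun x : n.-tuple bool => [forall j in S, tnth x j]) =
          \big[andf/fun=> true]_(j in S) (fun x => tnth x j).
  apply: funext => x; rewrite -big_andE.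
  by rewrite (big_morph (fun g => g x) (id1 := true) (op1 := andb)).
apply: (big_ind (fun g => Lambda (total_pfun g))) => [|g h|j _].
- exact: Lambda_const.
- exact: Lambda_and.
- exact: partial_clone_Lambda.2.1 n j.
Qed.

Section MeetHomomorphisms.
Variable n : nat.

Definition andt (x y : n.-tuple bool) := [tuple tnth x j && tnth y j | j < n].
Definition onet : n.-tuple bool := [tuple true | _ < n].
Definition zero_at (j : 'I_n) : n.-tuple bool := [tuple i != j | i < n].

Lemma tuple_bigandt (x : n.-tuple bool) :
  x = \big[andt/onet]_(j | ~~ tnth x j) zero_at j.
Proof.
apply: eq_from_tnth => i.
rewrite (big_morph (fun y : n.-tuple bool => tnth y i) (id1 := true) (op1 := andb))
  => [|y z|]; rewrite ?tnth_mktuple // big_andE.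
apply/idP/forall_inP => [xi j|xi]; first by rewrite tnth_mktuple; apply: contraNneq => <-.
by apply: contraT => /xi; rewrite tnth_mktuple eqxx.
Qed.

Variable F : n.-tuple bool -> bool.
Hypotheses (F_andt : {morph F : x y / andt x y >-> x && y}) (F_onet : F onet).

Lemma andt_hom_forall x : F x = [forall j, ~~ F (zero_at j) ==> tnth x j].
Proof.
rewrite {1}(tuple_bigandt x) (big_morph F F_andt (idP F_onet)) big_andE.
by apply: eq_forallb => j; case: (tnth x j); case: (F _).
Qed.

End MeetHomomorphisms.

Definition and_graph (x : option bool -> bool) : Prop :=
  x None = x (Some false) && x (Some true).

Lemma and_graph_and (x y : option bool -> bool) :
  and_graph x -> and_graph y -> and_graph (fun i => x i && y i).
Proof. by rewrite /and_graph => -> ->; rewrite andbACA. Qed.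

Lemma preserves_and_graph_morph (f : pfun) :
  (forall x, fn f x <> None) -> preserves and_graph f ->
  {morph (fun x => odflt false (fn f x)) : x y / andt x y >-> x && y}.
Proof.
move=> f_tot f_and x y.
apply: (f_and (fun o => if o is Some b then if b then y else x else andt x y)).
- by case=> [[]|].
- by move=> j; rewrite /and_graph tnth_mktuple.
Qed.

Lemma Pol_and_graph_total_sub_Lambda : Pol and_graph `&` O2 `<=` Lambda.
Proof.
case=> n Ff [[/= n_gt0 f_and] [_ f_tot]].
pose F x := odflt false (Ff x).
have F_andt : {morph F : x y / andt x y >-> x && y}.
  exact: preserves_and_graph_morph f_tot f_and.
have -> : Ff = fun x => Some (F x).
  by apply: funext => x; rewrite /F; move: (f_tot x) => /=; case: (Ff x).
have [F_onet|F_onet] := boolP (F (onet n)).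
  have -> : (fun x => Some (F x)) =
            fun x => Some [forall j in [set j | ~~ F (zero_at j)]%SET, tnth x j].
    apply: funext => x; rewrite (andt_hom_forall F_andt F_onet).
    by congr Some; apply: eq_forallb => j; rewrite inE.
  exact: Lambda_forall_in.
have -> : (fun x => Some (F x)) = fun _ => Some false.
  apply: funext => x; have <- : andt x (onet n) = x.
    by apply: eq_from_tnth => j; rewrite !tnth_mktuple andbT.
  by rewrite F_andt (negbTE F_onet) andbF.
exact: Lambda_const.
Qed.

Section SeparatingFunctions.
Import mathcomp.boot.fintype mathcomp.boot.finset.
Local Close Scope classical_set_scope.

Definition card13 (T : finType) (A : {set T}) : bool := #|A| \in [:: 1; 3].

Lemma card13_le3 (T : finType) (A : {set T}) : card13 A -> #|A| <= 3.
Proof. by rewrite /card13 !inE => /orP[] /eqP ->. Qed.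

Lemma card_setU_leq_subset (T : finType) (A B : {set T}) : #|A :|: B| <= #|A| -> B \subset A.
Proof.
move=> le_AB_A; have /eqP -> : A == A :|: B by rewrite eqEcard subsetUl.
exact: subsetUr.
Qed.

Lemma card_setU3_le (T : finType) (A B C : {set T}) :
  #|A :|: B :|: C| <= #|A| + #|B| + #|C|.
Proof. by rewrite !(leq_trans (leq_card_setU _ _).1) ?leq_add2r ?(leq_card_setU _ _).1. Qed.

Lemma exists_third n (a b : 'I_n) : 2 < n -> exists c : 'I_n, (c != a) && (c != b).
Proof.
move=> n_gt2; have : 0 < #|~: [set a; b]|.
  rewrite -(ltn_add2l #|[set a; b]|) addn0 cardsC card_ord (leq_ltn_trans _ n_gt2) // cards2.
  by case: (a != b).
by case/card_gt0P => c; rewrite !inE negb_or; exists c.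
Qed.

Section Card13Cover.
Variables (n m : nat) (Y : 'I_n -> {set 'I_m}).
Hypotheses (n_gt2 : 2 < n) (Y_card13 : forall a, card13 (Y a))
  (Y_union3 : forall a b c, a != b -> a != c -> b != c -> card13 (Y a :|: Y b :|: Y c)).

Lemma card13_absorb a : #|Y a| = 3 -> forall b, Y b \subset Y a.
Proof.
move=> Ya3 b; have [-> //|ab] := eqVneq a b.
have [c /andP[ca cb]] := exists_third a b n_gt2.
have /card_setU_leq_subset : #|Y a :|: (Y b :|: Y c)| <= #|Y a|.
  by rewrite setUA Ya3 card13_le3 // Y_union3 // eq_sym.
exact/subset_trans/subsetUl.
Qed.

Lemma card13_singletons_const a b : (forall c, #|Y c| = 1) -> a != b -> Y a = Y b ->
  forall c, Y c \subset Y a.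
Proof.
move=> Y1 ab Yab c; have [-> //|ca] := eqVneq c a.
have [->|cb] := eqVneq c b; first by rewrite Yab.
apply: card_setU_leq_subset; rewrite Y1.
have : card13 (Y a :|: Y b :|: Y c) by apply: Y_union3; rewrite // eq_sym.
rewrite -Yab setUid /card13 !inE => /orP[/eqP -> //|/eqP U3].
by have := (leq_card_setU (Y a) (Y c)).1; rewrite U3 !Y1.
Qed.

Lemma card13_bigcup_neqT : 3 < m -> m != n -> \bigcup_a Y a != setT.
Proof.
move=> m_gt3 mn.
have small_cover a : (forall b, Y b \subset Y a) -> \bigcup_b Y b != setT.
  move=> sub; apply: contraTneq (card13_le3 (Y_card13 a)) => cover.
  rewrite -ltnNge (leq_trans m_gt3) // -{1}(card_ord m) -cardsT -cover.
  exact/subset_leq_card/bigcupsP.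
have [/existsP[a /eqP Ya3]|no3] := boolP [exists a, #|Y a| == 3].
  by apply: (small_cover a); apply: card13_absorb.
have Y1 a : #|Y a| = 1.
  by move: (Y_card13 a) (existsPn no3 a); rewrite /card13 !inE => /orP[] /eqP ->.
have [psi Ypsi] : exists psi : 'I_n -> 'I_m, forall a, Y a = [set psi a].
  apply: (@fin_all_exists _ (fun=> 'I_m) (fun a x => Y a = [set x])) => a.
  by apply/cards1P; rewrite Y1.
have [/injectiveP psi_inj|/injectivePn[a [b ab psi_ab]]] :=
  boolP (injectiveb psi); last first.
  by apply: (small_cover a); apply: card13_singletons_const Y1 ab _; rewrite !Ypsi psi_ab.
have -> : \bigcup_a Y a = psi @: setT.
  apply/setP => j; apply/bigcupP/imsetP => [[a _]|[a _ ->]].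
    by rewrite Ypsi inE => /eqP ->; exists a.
  by exists a; rewrite ?Ypsi ?inE.
apply: contra mn => /eqP psiT.
by rewrite -{1}(card_ord m) -cardsT -psiT card_imset // cardsT card_ord.
Qed.

End Card13Cover.

Definition zeros n (x : n.-tuple bool) : {set 'I_n} := [set j | ~~ tnth x j].

Definition sep_fun n : pfun :=
  PFun (fun x : n.-tuple bool =>
    if card13 (zeros x) || (zeros x == setT) then Some (zeros x != setT) else None).

Definition sep_rel n (y : {set 'I_n} -> bool) : Prop :=
  [/\ forall a b c, a != b -> a != c -> b != c ->
        y [set a] -> y [set b] -> y [set c] -> y [set a; b; c],
      forall a b c, a != b -> a != c -> b != c -> y [set a; b; c] -> y [set a]
    & (forall a, y [set a]) -> y setT].
#[global] Arguments sep_rel : clear implicits.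

Lemma sep_fun_odflt n (x : n.-tuple bool) : fn (sep_fun n) x <> None ->
  odflt false (fn (sep_fun n) x) = (zeros x != setT).
Proof. by rewrite /=; case: ifP. Qed.

Lemma sep_fun_dom n (x : n.-tuple bool) : fn (sep_fun n) x <> None ->
  zeros x != setT -> card13 (zeros x).
Proof. by rewrite /=; case: ifP => // /orP[// | /eqP ->]; rewrite eqxx. Qed.

Lemma card_lt_neqT n (A : {set 'I_n}) : #|A| < n -> A != setT.
Proof. by apply: contraTneq => ->; rewrite cardsT card_ord ltnn. Qed.

Lemma preserves_and_graph_sep_fun n : 6 < n -> preserves and_graph (sep_fun n).
Proof.
move=> n_gt6 r r_dom r_col; rewrite /and_graph !sep_fun_odflt //.
have -> : zeros (r None) = zeros (r (Some false)) :|: zeros (r (Some true)).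
  by apply/setP => j; move: (r_col j); rewrite /and_graph !inE => ->; rewrite negb_and.
have [->|Z0] := eqVneq (zeros (r (Some false))) setT; first by rewrite setTU eqxx.
have [->|Z1] := eqVneq (zeros (r (Some true))) setT; first by rewrite setUT eqxx andbF.
rewrite card_lt_neqT // (leq_ltn_trans (leq_card_setU _ _).1) // (leq_ltn_trans _ n_gt6) //.
by rewrite (leq_add (card13_le3 (sep_fun_dom _ Z0)) (card13_le3 (sep_fun_dom _ Z1))).
Qed.

Lemma set3_rot (T : finType) (x y z : T) : [set x; y; z] = [set y; z; x].
Proof. by apply/setP => t; rewrite !inE; case: (t == x); case: (t == y); case: (t == z). Qed.

Section SepRelColumns.
Variables (n m : nat) (r : {set 'I_n} -> m.-tuple bool).
Hypothesis r_col : forall j, sep_rel n (fun S => tnth (r S) j).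

Lemma zeros_sep_rel_single a b c : a != b -> a != c -> b != c ->
  zeros (r [set a]) \subset zeros (r [set a; b; c]).
Proof.
move=> ab ac bc; apply/subsetP => j; rewrite !inE; apply: contraNN.
by have [_ col _] := r_col j; exact: col.
Qed.

Lemma zeros_sep_rel_triple a b c : a != b -> a != c -> b != c ->
  zeros (r [set a; b; c]) = zeros (r [set a]) :|: zeros (r [set b]) :|: zeros (r [set c]).
Proof.
move=> ab ac bc; apply/eqP; rewrite eqEsubset; apply/andP; split.
  apply/subsetP => j; rewrite !inE; apply: contraLR; rewrite !negb_or !negbK.
  by case/andP=> /andP[ja jb] jc; have [col _ _] := r_col j; exact: col.
have ba : b != a by rewrite eq_sym.
have ca : c != a by rewrite eq_sym.
have cb : c != b by rewrite eq_sym.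
rewrite !subUset zeros_sep_rel_single // (set3_rot a b c) zeros_sep_rel_single //.
by rewrite (set3_rot b c a) zeros_sep_rel_single.
Qed.

Lemma zeros_sep_rel_setT : zeros (r setT) \subset \bigcup_a zeros (r [set a]).
Proof.
apply/subsetP => j; rewrite inE => jZ; apply/bigcupP.
have [/existsP[a ja]|none] := boolP [exists a, j \in zeros (r [set a])]; first by exists a.
have [_ _ col] := r_col j.
by move: jZ; rewrite col // => a; move: (existsPn none a); rewrite inE negbK.
Qed.

End SepRelColumns.

Lemma preserves_sep_rel_sep_fun n m : 2 < n -> 9 < m -> m != n ->
  preserves (sep_rel n) (sep_fun m).
Proof.
move=> n_gt2 m_gt9 mn r r_dom r_col.
pose Z S := zeros (r S).
have -> : (fun S => odflt false (fn (sep_fun m) (r S))) = fun S => Z S != setT.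
  by apply: funext => S; exact: sep_fun_odflt.
have Z_card13 S : Z S != setT -> card13 (Z S) := sep_fun_dom (r_dom S).
have Z_triple := zeros_sep_rel_triple r_col.
have triple_small a b c : a != b -> a != c -> b != c ->
    Z [set a] != setT -> Z [set b] != setT -> Z [set c] != setT -> Z [set a; b; c] != setT.
  move=> ab ac bc /Z_card13/card13_le3 Za /Z_card13/card13_le3 Zb /Z_card13/card13_le3 Zc.
  rewrite /Z Z_triple // card_lt_neqT // (leq_ltn_trans (card_setU3_le _ _ _)) //.
  by rewrite (leq_ltn_trans _ m_gt9) // (leq_add (leq_add Za Zb) Zc).
split=> [a b c ab ac bc|a b c ab ac bc|Zsing]; first exact: triple_small.
  apply: contraNneq => ZaT; rewrite eqEsubset subsetT -ZaT.
  exact: zeros_sep_rel_single.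
apply: contraTneq (@card13_bigcup_neqT n m (fun a => Z [set a]) n_gt2 _ _ _ mn)
  => [ZT||a b c ab ac bc|].
- by rewrite negbK eqEsubset subsetT -ZT zeros_sep_rel_setT.
- by move=> a; apply/Z_card13/Zsing.
- by rewrite -Z_triple //; apply/Z_card13/triple_small.
- exact: leq_trans m_gt9.
Qed.

Lemma sep_fun_not_preserves n : 1 < n -> ~ preserves (sep_rel n) (sep_fun n).
Proof.
move=> n_gt1 pres.
pose T (S : {set 'I_n}) := if card13 S then S else setT.
pose r S : n.-tuple bool := [tuple j \notin T S | j < n].
have ZT S : zeros (r S) = T S by apply/setP => j; rewrite inE tnth_mktuple negbK.
have T1 a : T [set a] = [set a] by rewrite /T /card13 cards1.
have T3 a b c : a != b -> a != c -> b != c -> T [set a; b; c] = [set a; b; c].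
  by move=> ab ac bc; rewrite /T /card13 -setUA cardsU1 cards2 !inE negb_or ab ac bc.
have TT : T setT = setT by rewrite /T; case: ifP.
have r_dom S : fn (sep_fun n) (r S) <> None.
  rewrite /= ZT; case: ifP => // /negP[].
  by rewrite /T; case: ifP => [->|]; rewrite ?eqxx ?orbT.
have r_col j : sep_rel n (fun S => tnth (r S) j).
  split=> [a b c ab ac bc|a b c ab ac bc|]; rewrite ?tnth_mktuple ?T3 ?T1 ?TT //.
  - by rewrite !inE !negb_or => -> -> ->.
  - by rewrite !inE !negb_or => /andP[/andP[]].
  - by move=> /(_ j); rewrite tnth_mktuple T1 !inE eqxx.
have [_ _ singletons_setT] := pres r r_dom r_col.
suff /singletons_setT : forall a, odflt false (fn (sep_fun n) (r [set a])).
  by rewrite sep_fun_odflt // ZT TT eqxx.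
by move=> a; rewrite sep_fun_odflt // ZT T1 card_lt_neqT // cards1.
Qed.

Lemma sep_rel_and n (x y : {set 'I_n} -> bool) :
  sep_rel n x -> sep_rel n y -> sep_rel n (fun S => x S && y S).
Proof.
move=> [x1 x2 x3] [y1 y2 y3]; split=> [a b c ab ac bc|a b c ab ac bc|xy].
- by move=> /andP[? ?] /andP[? ?] /andP[? ?]; rewrite (x1 a b c) ?(y1 a b c).
- by move=> /andP[? ?]; rewrite (x2 a b c) ?(y2 a b c).
- by rewrite x3 ?y3 // => a; have /andP[] := xy a.
Qed.

Lemma sep_rel_const n b : 0 < n -> sep_rel n (fun=> b).
Proof. by move=> n_gt0; case: b; split=> // /(_ (Ordinal n_gt0)). Qed.

End SeparatingFunctions.

(* Arities are shifted to at least 10 so that three zero sets with at most three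
   elements each never cover all coordinates. *)
Definition sep_clone (A : set nat) : set pfun :=
  Pol and_graph `&` \bigcap_(k in ~` A) Pol (sep_rel (k + 10)).

Lemma sep_clone_I_str A : I_str Lambda (sep_clone A).
Proof.
split.
  apply: strong_partial_clone_setI_bigcap => *; exact: strong_partial_clone_Pol.
apply/seteqP; split.
  by move=> f [[f_and _] f_tot]; exact: Pol_and_graph_total_sub_Lambda.
move=> f Lf; split; last exact: (total_clone_gen_clone Lambda_gens_total).2.
split; first by apply: Lambda_sub_Pol Lf => //; exact: and_graph_and.
move=> k _; apply: Lambda_sub_Pol Lf; first exact: sep_rel_and.
all: exact/sep_rel_const/ltn_addl.
Qed.

Lemma sep_fun_sep_clone A k : sep_clone A (sep_fun (k + 10)) <-> A k.
Proof.
split=> [[_ sep_pres]|Ak].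
  apply: contrapT => nAk.
  by apply: (@sep_fun_not_preserves (k + 10)); [exact: ltn_addl | exact: (sep_pres k nAk).2].
split; first by split; [exact: ltn_addl | apply/preserves_and_graph_sep_fun/ltn_addl].
move=> j nAj; split; first exact: ltn_addl.
apply: preserves_sep_rel_sep_fun; rewrite ?ltn_addl // eqn_add2r.
by apply/eqP => kj; apply: nAj; rewrite -kj.
Qed.

Lemma sep_clone_inj : injective sep_clone.
Proof.
move=> A B AB; apply: funext => k; apply: propext.
by rewrite -!(sep_fun_sep_clone _ k) AB.
Qed.

Definition code (f : pfun) : nat :=
  pickle (ar f, [seq fn f x | x <- enum {: (ar f).-tuple bool}]).

Lemma code_inj : injective code.
Proof.
move=> [n F] [n' G] /(pcan_inj pickleK_inv) /= [e]; subst n' => /eq_in_map FG.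
by congr PFun; apply: funext => x; apply: FG; rewrite mem_enum.
Qed.

Lemma card_le_inj T U (A : set T) (B : set U) (f : T -> U) :
  {in A &, injective f} -> f @` A `<=` B -> A #<= B.
Proof.
move=> f_inj fAB; apply: card_le_trans (subset_card_le fAB).
by have /card_eqPle[] := card_esym (inj_card_eq f_inj).
Qed.

Lemma card_powerset_le T U (f : T -> U) : injective f -> [set: set T] #<= [set: set U].
Proof.
move=> f_inj; apply: (@card_le_inj _ _ _ _ (image^~ f)) => // X Y _ _ XY.
by apply: funext => x; rewrite -(image_inj f_inj) XY image_inj.
Qed.

Theorem mainTheorem5 : I_str Lambda #= [set: set nat].
Proof.
apply/card_eqPle; split; first exact: card_le_trans (card_leT _) (card_powerset_le code_inj).
apply: (@card_le_inj _ _ _ _ sep_clone) => [A B _ _|_ [A _ <-]].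
  exact: sep_clone_inj.
exact: sep_clone_I_str.
Qed.
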